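(* Let $R$ be an ordered ring with unit. Fix either a finite size $n$ or the infinite index set $\{1,2,3,\dots\}$. The set of all upper triangular matrices (of that size) with entries in $R$ whose diagonal entries are all positive and invertible in $R$ forms a group under matrix multiplication, and this group is orderable, i.e. it admits a relation $>$ such that for all $X,Y,Z$ exactly one of $X>Y$, $Y>X$, $X=Y$ holds, $>$ is transitive, and $X>Y$ implies $AXB>AYB$ for all $A,B$ in the group.
   Context: An ordered ring is a ring $R$ with a relation $>$ such that the additive group is totally ordered by $>$ with $x>y \Rightarrow a+x+b>a+y+b$, and such that $a>0$ and $x>y$ imply $ax>ay$ and $xa>ya$. An upper triangular (possibly infinite) matrix is one with all entries below the main diagonal equal to $0$; for infinite matrices indexed by positive integers, products are defined entrywise by the (finite) sums $\sum_{i\le j\le k} x_{ij}y_{jk}$. *)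

From mathcomp Require Import all_boot all_order all_algebra.
Set Implicit Arguments. Unset Strict Implicit. Unset Printing Implicit Defensive.
Import GRing.Theory.
Local Open Scope ring_scope.

Definition ordered_ring (R : nzRingType) (gt : R -> R -> Prop) : Prop :=
  (forall x : R, ~ gt x x) /\
  (forall x y z : R, gt x y -> gt y z -> gt x z) /\
  (forall x y : R, x <> y -> gt x y \/ gt y x) /\
  (forall a b x y : R, gt x y -> gt (a + x + b) (a + y + b)) /\
  (forall a x y : R, gt a 0 -> gt x y -> gt (a * x) (a * y) /\ gt (x * a) (y * a)).

Definition invertible (R : nzRingType) (x : R) : Prop :=
  exists y : R, x * y = 1 /\ y * x = 1.

Definition UT_fin (R : nzRingType) (gt : R -> R -> Prop) (n : nat)
  (A : 'M[R]_n) : Prop :=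
  (forall i j : 'I_n, (j < i)%N -> A i j = 0) /\
  (forall i : 'I_n, gt (A i i) 0 /\ invertible (A i i)).

(* ---------- infinite index set {1,2,3,...} (encoded as nat, shifted by 1) *)
Definition imat (R : Type) := nat -> nat -> R.

Definition imul (R : nzRingType) (X Y : imat R) : imat R :=
  fun i k => \sum_(i <= j < k.+1) X i j * Y j k.

Definition ione (R : nzRingType) : imat R :=
  fun i j => if i == j then 1 else 0.

Definition UT_inf (R : nzRingType) (gt : R -> R -> Prop) (A : imat R) : Prop :=
  (forall i j : nat, (j < i)%N -> A i j = 0) /\
  (forall i : nat, gt (A i i) 0 /\ invertible (A i i)).

Definition is_group_in (T : Type) (G : T -> Prop) (mul : T -> T -> T) (e : T)
  : Prop :=
  G e /\
  (forall X Y, G X -> G Y -> G (mul X Y)) /\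
  (forall X Y Z, G X -> G Y -> G Z -> mul (mul X Y) Z = mul X (mul Y Z)) /\
  (forall X, G X -> mul e X = X /\ mul X e = X) /\
  (forall X, G X -> exists Y, G Y /\ mul X Y = e /\ mul Y X = e).

Definition orderable_in (T : Type) (G : T -> Prop) (mul : T -> T -> T) : Prop :=
  exists gtG : T -> T -> Prop,
    (forall X Y, G X -> G Y ->
       (gtG X Y \/ gtG Y X \/ X = Y) /\
       ~ (gtG X Y /\ gtG Y X) /\ ~ (gtG X Y /\ X = Y) /\ ~ (gtG Y X /\ X = Y)) /\
    (forall X Y Z, G X -> G Y -> G Z -> gtG X Y -> gtG Y Z -> gtG X Z) /\
    (forall A B X Y, G A -> G B -> G X -> G Y ->
       gtG X Y -> gtG (mul (mul A X) B) (mul (mul A Y) B)).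

(* The group part is back substitution: an upper triangular matrix with
   invertible diagonal has an upper triangular right inverse, solved column by
   column, whose diagonal is positive because a > 0 and a b = 1 force b > 0;
   in a monoid where every element has a right inverse, right inverses are
   two-sided.

   For the order, compare X and Y at the first entry where they differ,
   scanning the superdiagonals d = 0, 1, 2, ... in turn and each one from top
   to bottom.  Since
     (A X)_(i, i+d) = A_(i,i) X_(i, i+d) + sum_(i < j <= i+d) A_(i,j) X_(j, i+d)
   and every X_(j, i+d) with j > i lies on an earlier superdiagonal, a left
   factor with positive diagonal keeps the first difference in place and
   multiplies it by A_(i,i) > 0; right factors are symmetric.  Totality uses
   that this scanning order on positions is a well-order.

   The finite case is transported from the infinite one: padding an n x n
   matrix with the identity is multiplicative on upper triangular matrices,
   and truncation to the leading n x n block is a multiplicative left inverse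
   of it. *)

From mathcomp Require Import all_boot all_order all_algebra zify.
From Stdlib Require Import FunctionalExtensionality ClassicalEpsilon.
Set Implicit Arguments. Unset Strict Implicit. Unset Printing Implicit Defensive.
Import GRing.Theory.
Local Open Scope ring_scope.

Lemma is_group_in_hom_image (T U : Type) (G : T -> Prop) (mul : T -> T -> T) (e : T)
    (H : U -> Prop) (mul' : U -> U -> U) (e' : U) (g : U -> T) :
  is_group_in H mul' e' ->
  (forall Y, H Y -> G (g Y)) ->
  (forall X, G X -> exists2 Y, H Y & g Y = X) ->
  (forall Y Z, H Y -> H Z -> g (mul' Y Z) = mul (g Y) (g Z)) ->
  g e' = e ->
  is_group_in G mul e.
Proof.
move=> [He' [mulH [mulHA [mulH1 invH]]]] gG gsurj gM ge.
have gM' X Y : G X -> G Y -> exists2 Z, H Z & mul X Y = g Z.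
  move=> /gsurj[X' HX' <-] /gsurj[Y' HY' <-].
  by exists (mul' X' Y'); rewrite ?gM //; apply: mulH.
split; first by rewrite -ge; apply: gG.
split; first by move=> X Y GX GY; have [Z HZ ->] := gM' X Y GX GY; apply: gG.
split.
  move=> X Y Z /gsurj[X' HX' <-] /gsurj[Y' HY' <-] /gsurj[Z' HZ' <-].
  by rewrite -!gM ?mulHA //; apply: mulH.
split.
  move=> X /gsurj[X' HX' <-]; rewrite -ge -!gM //.
  by have [-> ->] := mulH1 X' HX'.
move=> X /gsurj[X' HX' <-]; have [Y' [HY' [e1 e2]]] := invH X' HX'.
by exists (g Y'); split; [apply: gG | rewrite -!gM // e1 e2].
Qed.

Lemma orderable_in_pullback (T U : Type) (G : T -> Prop) (mul : T -> T -> T)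
    (H : U -> Prop) (mul' : U -> U -> U) (f : T -> U) :
  (forall X Y, G X -> G Y -> G (mul X Y)) ->
  (forall X, G X -> H (f X)) ->
  (forall X Y, G X -> G Y -> f X = f Y -> X = Y) ->
  (forall X Y, G X -> G Y -> f (mul X Y) = mul' (f X) (f Y)) ->
  orderable_in H mul' -> orderable_in G mul.
Proof.
move=> mulG fH f_inj fM [gtH [trichoH [transH invH]]].
exists (fun X Y => gtH (f X) (f Y)); split; last split.
- move=> X Y GX GY.
  have [tri [asym [irrXY irrYX]]] := trichoH _ _ (fH X GX) (fH Y GY).
  split; first by case: tri => [|[|/f_inj-> //]]; auto.
  split=> //; split=> -[gXY eXY]; subst X; by [apply: irrXY | apply: irrYX].
- by move=> X Y Z GX GY GZ; apply: transH; apply: fH.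
move=> A B X Y GA GB GX GY gtXY.
have GAX := mulG _ _ GA GX; have GAY := mulG _ _ GA GY.
by rewrite !fM //; apply: invH; auto.
Qed.

Section OrderedRing.
Variables (R : nzRingType) (gt : R -> R -> Prop).
Hypothesis hR : ordered_ring gt.

Lemma gt_irrefl x : ~ gt x x.
Proof. by case: hR. Qed.

Lemma gt_trans x y z : gt x y -> gt y z -> gt x z.
Proof. by case: hR => _ [trans _]; apply: trans. Qed.

Lemma gt_total x y : x <> y -> gt x y \/ gt y x.
Proof. by case: hR => _ [_ [total _]]; apply: total. Qed.

Lemma gt_addr c x y : gt x y -> gt (x + c) (y + c).
Proof. by case: hR => _ [_ [_ [add _]]] /(add 0 c); rewrite !add0r. Qed.

Lemma gt_addl c x y : gt x y -> gt (c + x) (c + y).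
Proof. by case: hR => _ [_ [_ [add _]]] /(add c 0); rewrite !addr0. Qed.

Lemma gt_mul2l a x y : gt a 0 -> gt x y -> gt (a * x) (a * y).
Proof. by case: hR => _ [_ [_ [_ mul]]] a0 /(mul a _ _ a0)[]. Qed.

Lemma gt_mul2r a x y : gt a 0 -> gt x y -> gt (x * a) (y * a).
Proof. by case: hR => _ [_ [_ [_ mul]]] a0 /(mul a _ _ a0)[]. Qed.

Lemma gt10 : gt 1 0.
Proof.
have [//|gt01] : gt 1 0 \/ gt 0 1 by apply: gt_total; apply/eqP; exact: oner_neq0.
have gtN10 : gt (-1) 0 by have := gt_addr (-1) gt01; rewrite add0r subrr.
have := gt_mul2l gtN10 gtN10; rewrite mulr0 mulrNN mulr1 => gt1_0.
by case: (gt_irrefl (gt_trans gt01 gt1_0)).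
Qed.

Lemma mul_gt0 a b : gt a 0 -> gt b 0 -> gt (a * b) 0.
Proof. by move=> a0 /(gt_mul2l a0); rewrite mulr0. Qed.

Lemma rinv_gt0 a b : gt a 0 -> a * b = 1 -> gt b 0.
Proof.
move=> a0 ab1.
have b_neq0 : b <> 0.
  by move=> b0; move: ab1; rewrite b0 mulr0 => /eqP; rewrite eq_sym oner_eq0.
have [//|gt0b] := gt_total b_neq0.
have := gt_mul2l a0 gt0b; rewrite mulr0 ab1 => gt01.
by case: (gt_irrefl (gt_trans gt01 gt10)).
Qed.

End OrderedRing.

Lemma invertible1 (R : nzRingType) : invertible (1 : R).
Proof. by exists 1; rewrite mulr1. Qed.

Lemma invertibleM (R : nzRingType) (a b : R) :
  invertible a -> invertible b -> invertible (a * b).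
Proof.
move=> [a' [aa' a'a]] [b' [bb' b'b]]; exists (b' * a'); split.
  by rewrite mulrA -(mulrA a) bb' mulr1.
by rewrite mulrA -(mulrA b') a'a mulr1.
Qed.

Lemma big1_nat (T : Type) (idx : T) (op : Monoid.law idx) m n (F : nat -> T) :
  (forall i, (m <= i < n)%N -> F i = idx) -> \big[op/idx]_(m <= i < n) F i = idx.
Proof.
by move=> F_idx; rewrite big1_seq // => i /andP[_]; rewrite mem_index_iota; apply: F_idx.
Qed.

Section InfiniteMatrices.
Variable R : nzRingType.
Implicit Types X Y Z : imat R.

Definition upper X : Prop := forall i j, (j < i)%N -> X i j = 0.

Lemma imul_upper X Y : upper (imul X Y).
Proof. by move=> i k ki; rewrite /imul big_geq. Qed.

Lemma imul_diag X Y i : imul X Y i i = X i i * Y i i.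
Proof. by rewrite /imul big_nat1. Qed.

Lemma imulE X Y N i k : upper X -> upper Y -> (k < N)%N ->
  imul X Y i k = \sum_(0 <= j < N) X i j * Y j k.
Proof.
move=> Xup Yup kN; rewrite /imul; case: (leqP i k) => ik; last first.
  rewrite big_geq // big1_seq // => j _.
  by case: (ltnP j i) => ji; [rewrite Xup ?mul0r | rewrite Yup ?mulr0 //; lia].
rewrite [RHS](big_cat_nat _ (n := i)) //=; last by lia.
rewrite [X in _ + X](big_cat_nat _ (n := k.+1)) //=; last by lia.
rewrite [X in _ = X + _]big1_nat => [|j /andP[_ ji]]; last by rewrite Xup ?mul0r.
rewrite [X in _ + (_ + X)]big1_nat => [|j /andP[kj _]]; last by rewrite Yup ?mulr0.
by rewrite add0r addr0.
Qed.

Lemma imul1 X : upper X -> imul (@ione R) X = X.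
Proof.
move=> Xup; apply: functional_extensionality => i; apply: functional_extensionality => k.
rewrite /imul /ione; case: (leqP i k) => ik; last by rewrite big_geq // Xup.
rewrite big_ltn // eqxx mul1r big1_nat ?addr0 // => j /andP[ij _].
by rewrite (_ : (i == j) = false) ?mul0r //; lia.
Qed.

Lemma imulr1 X : upper X -> imul X (@ione R) = X.
Proof.
move=> Xup; apply: functional_extensionality => i; apply: functional_extensionality => k.
rewrite /imul /ione; case: (leqP i k) => ik; last by rewrite big_geq // Xup.
rewrite big_nat_recr //= eqxx mulr1 big1_nat ?add0r // => j /andP[_ jk].
by rewrite (_ : (j == k) = false) ?mulr0 //; lia.
Qed.

Lemma imulA X Y Z : upper X -> upper Y -> upper Z ->
  imul (imul X Y) Z = imul X (imul Y Z).
Proof.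
move=> Xup Yup Zup; apply: functional_extensionality => i.
apply: functional_extensionality => l.
rewrite (imulE i (imul_upper X Y) Zup (ltnSn l)).
rewrite (imulE i Xup (imul_upper Y Z) (ltnSn l)).
transitivity (\sum_(0 <= j < l.+1) \sum_(0 <= m < l.+1) X i m * (Y m j * Z j l)).
  apply: eq_big_nat => j /andP[_ jl]; rewrite (imulE i Xup Yup jl) mulr_suml.
  by apply: eq_bigr => m _; rewrite mulrA.
rewrite exchange_big; apply: eq_bigr => m _.
by rewrite (imulE m Yup Zup (ltnSn l)) mulr_sumr.
Qed.

Lemma triangular_system_solvable X (b : nat -> R) k :
  (forall i, exists y, X i i * y = 1) ->
  exists c : nat -> R, (forall j, (k <= j)%N -> c j = 0) /\
    forall i, (i < k)%N -> \sum_(i <= j < k) X i j * c j = b i.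
Proof.
move=> Xrinv; elim: k b => [|k IHk] b; first by exists (fun=> 0).
have [y Xy] := Xrinv k.
pose ck := y * b k.
have [c [c_supp c_sol]] := IHk (fun i => b i - X i k * ck).
exists (fun j => if j == k then ck else c j); split.
  by move=> j kj; rewrite c_supp; [case: eqP => // jk; lia | lia].
move=> i ik; rewrite big_nat_recr //= eqxx.
rewrite (eq_big_nat _ _ (F2 := fun j => X i j * c j)) => [|j /andP[_ jk]]; last first.
  by rewrite (_ : (j == k) = false) //; lia.
case: (ltnP i k) => [ltik | leki]; first by rewrite c_sol // subrK.
have -> : i = k by lia.
by rewrite big_geq // add0r /ck mulrA Xy mul1r.
Qed.

End InfiniteMatrices.

Section UpperTriangularGroup.
Variables (R : nzRingType) (gt : R -> R -> Prop).
Hypothesis hR : ordered_ring gt.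
Implicit Types X Y Z : imat R.

Lemma UT_inf_ione : UT_inf gt (@ione R).
Proof.
split=> [i j ji | i]; rewrite /ione.
  by rewrite (_ : (i == j) = false) //; lia.
by rewrite eqxx; split; [apply: gt10 | apply: invertible1].
Qed.

Lemma UT_inf_mul X Y : UT_inf gt X -> UT_inf gt Y -> UT_inf gt (imul X Y).
Proof.
move=> [_ Xdiag] [_ Ydiag]; split=> [|i]; first exact: imul_upper.
have [X0 Xinv] := Xdiag i; have [Y0 Yinv] := Ydiag i.
by rewrite imul_diag; split; [apply: mul_gt0 | apply: invertibleM].
Qed.

Lemma UT_inf_rinv X : UT_inf gt X -> exists2 Y, UT_inf gt Y & imul X Y = @ione R.
Proof.
move=> [_ Xdiag].
have Xrinv i : exists y, X i i * y = 1 by have [_ [y [Xy _]]] := Xdiag i; exists y.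
have [c c_col] := ClassicalEpsilon.choice _
  (fun k : nat => triangular_system_solvable (fun i => (i == k)%:R) k.+1 Xrinv).
have Xc k : X k k * c k k = 1.
  by have [_ /(_ k (ltnSn k))] := c_col k; rewrite big_nat1 eqxx.
exists (fun j k => c k j); first split.
- by move=> j k kj; have [-> //] := c_col k.
- move=> k; have [X0 [y [Xy yX]]] := Xdiag k.
  have -> : c k k = y by rewrite -[y]mulr1 -(Xc k) mulrA yX mul1r.
  by split; [apply: rinv_gt0 Xy | exists (X k k)].
apply: functional_extensionality => i; apply: functional_extensionality => k.
rewrite /imul /ione; case: (ltnP k i) => [ki | ik].
  by rewrite big_geq // (_ : (i == k) = false) //; lia.
by have [_ ->] := c_col k; case: (i == k).
Qed.

Lemma UT_inf_group : is_group_in (UT_inf gt) (@imul R) (@ione R).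
Proof.
split; first exact: UT_inf_ione.
split; first exact: UT_inf_mul.
split; first by move=> X Y Z [Xup _] [Yup _] [Zup _]; apply: imulA.
split; first by move=> X [Xup _]; rewrite imul1 // imulr1.
move=> X UX; have [Y UY XY] := UT_inf_rinv UX; have [Z UZ YZ] := UT_inf_rinv UY.
have XZ : X = Z.
  case: UX UY UZ => [Xup _] [Yup _] [Zup _].
  by rewrite -[X]imulr1 // -YZ -imulA // XY imul1.
by exists Y; split=> //; split=> //; rewrite XZ.
Qed.

End UpperTriangularGroup.

Section DiagonalLexOrder.
Variables (R : nzRingType) (gt : R -> R -> Prop).
Hypothesis hR : ordered_ring gt.
Implicit Types A B X Y Z : imat R.

(* Entry (j, k) lies on the superdiagonal k - j; positions are scanned in the
   lexicographic order of (superdiagonal, row). *)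
Definition before (d' i' d i : nat) : Prop := (d' < d)%N \/ (d' = d /\ (i' < i)%N).

Definition agree_before X Y d i : Prop :=
  forall j k, (j <= k)%N -> before (k - j) j d i -> X j k = Y j k.

Definition gt_diaglex X Y : Prop :=
  exists d i, agree_before X Y d i /\ gt (X i (i + d)) (Y i (i + d)).

Lemma gt_diaglex_irrefl X : ~ gt_diaglex X X.
Proof. by case=> d [i [_]]; apply: gt_irrefl. Qed.

Lemma gt_diaglex_trans X Y Z : gt_diaglex X Y -> gt_diaglex Y Z -> gt_diaglex X Z.
Proof.
move=> [d1 [i1 [XY gtXY]]] [d2 [i2 [YZ gtYZ]]].
have [lt12|[[eqd eqi]|lt21]] :
    before d1 i1 d2 i2 \/ (d1 = d2 /\ i1 = i2) \/ before d2 i2 d1 i1.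
  by rewrite /before; lia.
- exists d1, i1; split; last by rewrite -YZ //; [lia | rewrite addKn].
  move=> j k jk b; rewrite XY // YZ //; move: b lt12; rewrite /before; lia.
- subst d2 i2; exists d1, i1; split; last exact: gt_trans gtXY gtYZ.
  by move=> j k jk b; rewrite XY // YZ.
- exists d2, i2; split; last by rewrite XY //; [lia | rewrite addKn].
  move=> j k jk b; rewrite XY // ?YZ //; move: b lt21; rewrite /before; lia.
Qed.

Lemma gt_diaglex_total X Y : upper X -> upper Y ->
  ~ gt_diaglex X Y -> ~ gt_diaglex Y X -> X = Y.
Proof.
move=> Xup Yup nXY nYX.
have diag_eq d i : X i (i + d) = Y i (i + d).
  elim/ltn_ind: d i => d IHd; elim/ltn_ind => i IHi.
  have XY : agree_before X Y d i.
    move=> j k jk [ltd | [eqd lti]]; rewrite -(subnKC jk); first exact: IHd.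
    by rewrite eqd; apply: IHi.
  have [//|neq] := eqVneq (X i (i + d)) (Y i (i + d)).
  have [gtXY|gtYX] := gt_total hR (elimN eqP neq).
    by case: nXY; exists d, i.
  by case: nYX; exists d, i; split=> // j k jk b; rewrite XY.
apply: functional_extensionality => i; apply: functional_extensionality => k.
by case: (leqP i k) => [ik | ki]; [rewrite -(subnKC ik) | rewrite Xup ?Yup].
Qed.

Lemma gt_diaglex_mul2l A X Y : (forall i, gt (A i i) 0) ->
  gt_diaglex X Y -> gt_diaglex (imul A X) (imul A Y).
Proof.
move=> A0 [d [i [XY gtXY]]]; exists d, i; split.
  move=> i' k ik b; apply: eq_big_nat => j /andP[ij jk].
  by rewrite XY //; move: b; rewrite /before; lia.
rewrite /imul !(big_ltn (leq_addr d i : (i < (i + d).+1)%N)).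
rewrite (eq_big_nat _ _ (F2 := fun j => A i j * Y j (i + d))) => [|j /andP[ij jk]].
  by apply: (gt_addr hR); apply: (gt_mul2l hR).
by rewrite XY // /before; lia.
Qed.

Lemma gt_diaglex_mul2r B X Y : (forall i, gt (B i i) 0) ->
  gt_diaglex X Y -> gt_diaglex (imul X B) (imul Y B).
Proof.
move=> B0 [d [i [XY gtXY]]]; exists d, i; split.
  move=> i' k ik b; apply: eq_big_nat => j /andP[ij jk].
  by rewrite XY //; move: b; rewrite /before; lia.
rewrite /imul !(big_nat_recr _ _ _ (leq_addr d i)) /=.
rewrite (eq_big_nat _ _ (F2 := fun j => Y i j * B j (i + d))) => [|j /andP[ij jk]].
  by apply: (gt_addl hR); apply: (gt_mul2r hR).
by rewrite XY // /before; lia.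
Qed.

Lemma UT_inf_orderable : orderable_in (UT_inf gt) (@imul R).
Proof.
exists gt_diaglex; split; last split.
- move=> X Y [Xup _] [Yup _]; split.
    have [|nXY] := classic (gt_diaglex X Y); first by left.
    have [|nYX] := classic (gt_diaglex Y X); first by right; left.
    by right; right; apply: gt_diaglex_total.
  split; first by case=> gtXY /(gt_diaglex_trans gtXY); apply: gt_diaglex_irrefl.
  by split=> -[+ XY]; rewrite XY; apply: gt_diaglex_irrefl.
- by move=> X Y Z _ _ _; apply: gt_diaglex_trans.
move=> A B X Y [_ Adiag] [_ Bdiag] _ _ gtXY.
apply: gt_diaglex_mul2r => [i | ]; first by case: (Bdiag i).
by apply: gt_diaglex_mul2l => // i; case: (Adiag i).
Qed.

End DiagonalLexOrder.

Section FiniteMatrices.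
Variables (R : nzRingType) (n : nat).
Implicit Types (A B : 'M[R]_n) (P Q : imat R).

(* Padding by the identity rather than by zeros keeps the diagonal invertible. *)
Definition embed A : imat R := fun i j =>
  match (insub i : option 'I_n), (insub j : option 'I_n) with
  | Some i', Some j' => A i' j'
  | _, _ => @ione R i j
  end.

Definition trunc P : 'M[R]_n := \matrix_(i, j) P i j.

Definition identity_outside P : Prop :=
  forall i j, (n <= i)%N || (n <= j)%N -> P i j = @ione R i j.

Lemma trunc_embed A : trunc (embed A) = A.
Proof. by apply/matrixP => i j; rewrite mxE /embed !valK. Qed.

Lemma trunc_ione : trunc (@ione R) = 1%:M.
Proof. by apply/matrixP => i j; rewrite !mxE /ione -val_eqE; case: eqP. Qed.

Lemma embed_identity_outside A : identity_outside (embed A).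
Proof.
move=> i j nij; rewrite /embed.
case: (insubP 'I_n i) => [i' ilt _|//]; case: (insubP 'I_n j) => [j' jlt _|//].
by move: nij; rewrite leqNgt ilt leqNgt jlt.
Qed.

Lemma embed_trunc P : identity_outside P -> embed (trunc P) = P.
Proof.
move=> P1; apply: functional_extensionality => i; apply: functional_extensionality => j.
rewrite /embed.
case: (insubP 'I_n i) => [i' _ ei|ni]; case: (insubP 'I_n j) => [j' _ ej|nj].
- by rewrite mxE ei ej.
- by rewrite P1 // (leqNgt n j) nj orbT.
- by rewrite P1 // leqNgt ni.
- by rewrite P1 // leqNgt ni.
Qed.

Lemma trunc_mul P Q : upper P -> upper Q -> trunc (imul P Q) = trunc P *m trunc Q.
Proof.
move=> Pup Qup; apply/matrixP => i k; rewrite !mxE (imulE i Pup Qup (ltn_ord k)).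
by rewrite big_mkord; apply: eq_bigr => j _; rewrite !mxE.
Qed.

Lemma imul_identity_outside P Q : upper P -> upper Q ->
  identity_outside P -> identity_outside Q -> identity_outside (imul P Q).
Proof.
move=> Pup Qup P1 Q1 i k /orP[ni | nk].
  rewrite -[RHS](Q1 i k) ?ni // -[in RHS](imul1 Qup); apply: eq_big_nat => j _.
  by rewrite P1 // ni.
rewrite -[RHS](P1 i k) ?nk ?orbT // -[in RHS](imulr1 Pup); apply: eq_big_nat => j _.
by rewrite Q1 // nk orbT.
Qed.

Lemma embed_mul A B : upper (embed A) -> upper (embed B) ->
  embed (A *m B) = imul (embed A) (embed B).
Proof.
move=> Aup Bup; rewrite -{1}(trunc_embed A) -{1}(trunc_embed B) -trunc_mul //.
rewrite embed_trunc //.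
by apply: imul_identity_outside => //; apply: embed_identity_outside.
Qed.

Variable gt : R -> R -> Prop.
Hypothesis hR : ordered_ring gt.

Lemma UT_fin_embed A : UT_fin gt A -> UT_inf gt (embed A).
Proof.
move=> [Alow Adiag]; split=> [i j ji | i]; rewrite /embed.
  case: (insubP 'I_n i) => [i' _ ei|_]; case: (insubP 'I_n j) => [j' _ ej|_];
    try by rewrite /ione (_ : (i == j) = false) //; lia.
  by apply: Alow; rewrite ei ej.
case: (insubP 'I_n i) => [i' _ _|_]; first exact: Adiag.
by rewrite /ione eqxx; split; [apply: gt10 | apply: invertible1].
Qed.

Lemma UT_fin_trunc P : UT_inf gt P -> UT_fin gt (trunc P).
Proof.
by move=> [Pup Pdiag]; split=> [i j ji | i]; rewrite mxE; [apply: Pup | apply: Pdiag].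
Qed.

Lemma UT_fin_group : is_group_in (UT_fin gt (n := n)) (@mulmx R n n n) 1%:M.
Proof.
apply: (is_group_in_hom_image (UT_inf_group hR) UT_fin_trunc).
- by move=> A UA; exists (embed A); [apply: UT_fin_embed | apply: trunc_embed].
- by move=> P Q [Pup _] [Qup _]; apply: trunc_mul.
exact: trunc_ione.
Qed.

Lemma UT_fin_orderable : orderable_in (UT_fin gt (n := n)) (@mulmx R n n n).
Proof.
have [_ [UT_fin_mul _]] := UT_fin_group.
apply: (orderable_in_pullback UT_fin_mul UT_fin_embed _ _ (UT_inf_orderable hR)).
- by move=> A B _ _ /(congr1 trunc); rewrite !trunc_embed.
by move=> A B /UT_fin_embed[Aup _] /UT_fin_embed[Bup _]; apply: embed_mul.
Qed.

End FiniteMatrices.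

Theorem lemma2 (R : nzRingType) (gt : R -> R -> Prop) (hR : ordered_ring gt) :
  (forall n : nat,
     is_group_in (UT_fin gt (n := n)) (@mulmx R n n n) 1%:M /\
     orderable_in (UT_fin gt (n := n)) (@mulmx R n n n)) /\
  (is_group_in (UT_inf gt) (@imul R) (@ione R) /\
   orderable_in (UT_inf gt) (@imul R)).
Proof.
split; first by move=> n; split; [apply: UT_fin_group | apply: UT_fin_orderable].
by split; [apply: UT_inf_group | apply: UT_inf_orderable].
Qed.
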